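(* Let $\Gamma$ be a 3-colex, let $c\in\{r,b,g,y\}$, and let $E=\prod_{\nu\in\Omega}X_\nu$ be an $X$-type error on the 3D color code defined on $\Gamma$, with syndrome $s$ (a function on the edges of $\Gamma^*$). Let $\pi_c(s)$ denote the restriction of $s$ to the edges of the minor complex $\Gamma^{*\setminus c}$. Then the error $\pi_c(E)=\prod_{\nu\in\Omega}X_{\pi_c(\nu)}$, regarded as an $X$-error on the 3D toric code associated to $\Gamma^{*\setminus c}$, produces exactly the syndrome $\pi_c(s)$; that is, for every edge $e$ of $\Gamma^{*\setminus c}$, the parity of the number of faces of $\Gamma^{*\setminus c}$ in $\mathrm{supp}(\pi_c(E))$ containing $e$ equals $s_e$.
   Context: Colors are $\{r,b,g,y\}$. A 3-colex $\Gamma$ is a 3-dimensional cell complex without boundary in which every vertex is 4-valent and lies in exactly four 3-cells, and whose 3-cells are properly 4-colored: every face lies in exactly two 3-cells, which have different colors. The dual complex $\Gamma^*$ has an $i$-cell for every $(3-i)$-cell of $\Gamma$, with incidences reversed; every 3-cell of $\Gamma^*$ is a tetrahedron (corresponding to a vertex of $\Gamma$). A vertex of $\Gamma^*$ is given the color of the corresponding 3-cell of $\Gamma$, so the four vertices of each tetrahedron have four distinct colors. A face (triangle) of $\Gamma^*$ is a $c$-face if none of its vertices has color $c$. Each tetrahedron $\nu$ has a unique $c$-face, denoted $\pi_c(\nu)$. The 3D color code on $\Gamma$ has one qubit per tetrahedron $\nu$ of $\Gamma^*$, $X$-stabilizer generators $B^X_v=\prod_{\nu\ni v}X_\nu$ for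 vertices $v$ of $\Gamma^*$ and $Z$-stabilizer generators $B^Z_e=\prod_{\nu\supset e}Z_\nu$ for edges $e$ of $\Gamma^*$. The syndrome of an $X$-error $\prod_{\nu\in\Omega}X_\nu$ is the function on edges $s_e=|\{\nu\in\Omega: e\subset\nu\}|\bmod 2$. The minor complex $\Gamma^{*\setminus c}$ is obtained from $\Gamma^*$ by deleting all vertices of color $c$ together with all edges and faces incident to them (so its edges are the edges of $\Gamma^*$ with no endpoint of color $c$, its faces are the $c$-faces of $\Gamma^*$, and its 3-cells are obtained by merging, for each $c$-vertex $v$, the tetrahedra containing $v$). The 3D toric code on $\Gamma^{*\setminus c}$ has qubits on the faces, $X$-stabilizer generators $\prod_{f\in\partial\mu}X_f$ for 3-cells $\mu$, and $Z$-checks $\prod_{f\supset e}Z_f$ for edges $e$; the syndrome of an $X$-error on faces is, at each edge $e$, the parity of the number of faces in its support containing $e$. Operators are mapped by $\pi_c(\prod_{\nu\in\Omega}X_\nu)=\prod_{\nu\in\Omega}X_{\pi_c(\nu)}$ (with $X_f^2=I$, so two tetrahedra sharing a $c$-face cancel). *)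

From mathcomp Require Import all_boot.
Set Implicit Arguments. Unset Strict Implicit. Unset Printing Implicit Defensive.

Definition color := 'I_4.

(* The dual complex Gamma^* of a 3-colex, given abstractly as a cell complex:
   finite types of vertices, edges, faces (triangles) and 3-cells (tetrahedra),
   with incidence ("is contained in") relations, and a coloring of vertices
   (vertex v gets the color of the corresponding 3-cell of Gamma). *)
Record dual_complex := DualComplex {
  Vx : finType; Ed : finType; Fc : finType; Tet : finType;
  col : Vx -> color;
  ev : Ed -> Vx -> bool;
  fv : Fc -> Vx -> bool;
  tv : Tet -> Vx -> bool;
  ef : Ed -> Fc -> bool;
  et : Ed -> Tet -> bool;
  ft : Fc -> Tet -> bool
}.

(* Structural axioms: Gamma^* is the dual of a 3-colex, i.e. every edge has two
   endpoints, every face is a triangle, every 3-cell is a tetrahedron whose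
   four vertices carry four distinct colors, incidences are compatible, and
   inside a tetrahedron edges/faces are determined by their vertices. *)
Definition is_colex_dual (K : dual_complex) : Prop :=
  [/\ (forall e : Ed K, #|[set v : Vx K | ev e v]| = 2),
      (forall f : Fc K, #|[set v : Vx K | fv f v]| = 3 /\
                        #|[set e : Ed K | ef e f]| = 3),
      (forall t : Tet K, [/\ #|[set v : Vx K | tv t v]| = 4,
                             #|[set e : Ed K | et e t]| = 6 &
                             #|[set f : Fc K | ft f t]| = 4]),
      (forall (e : Ed K) (f : Fc K) (t : Tet K) (v : Vx K),
         [/\ ef e f -> ev e v -> fv f v,
             et e t -> ev e v -> tv t v,
             ft f t -> fv f v -> tv t v &
             ef e f -> ft f t -> et e t]) &
   [/\ (forall (t : Tet K) (u v : Vx K), tv t u -> tv t v -> col u = col v -> u = v),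
      (forall (t : Tet K) (e e' : Ed K), et e t -> et e' t ->
          (forall v, ev e v = ev e' v) -> e = e') &
      (forall (t : Tet K) (f f' : Fc K), ft f t -> ft f' t ->
          (forall v, fv f v = fv f' v) -> f = f')]].

Definition is_cface (K : dual_complex) (c : color) (f : Fc K) : bool :=
  [forall v : Vx K, fv f v ==> (col v != c)].

(* pi_c(nu): the (unique) c-face of the tetrahedron nu. *)
Definition pi_c (K : dual_complex) (c : color) (nu : Tet K) : option (Fc K) :=
  [pick f : Fc K | ft f nu && is_cface c f].

Definition cc_syndrome (K : dual_complex) (Omega : {set Tet K}) (e : Ed K) : bool :=
  odd #|[set nu in Omega | et e nu]|.

(* Edges of the minor complex Gamma^{*\c}: no endpoint of color c. *)
Definition minor_edge (K : dual_complex) (c : color) (e : Ed K) : bool :=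
  [forall v : Vx K, ev e v ==> (col v != c)].

(* Support of pi_c(E) = prod_{nu in Omega} X_{pi_c(nu)} with X_f^2 = I. *)
Definition pi_support (K : dual_complex) (c : color) (Omega : {set Tet K}) : {set Fc K} :=
  [set f : Fc K | odd #|[set nu in Omega | pi_c c nu == Some f]|].

Definition tc_syndrome (K : dual_complex) (S : {set Fc K}) (e : Ed K) : bool :=
  odd #|[set f in S | ef e f]|.

From mathcomp Require Import all_boot.
Set Implicit Arguments. Unset Strict Implicit. Unset Printing Implicit Defensive.

(* Expanding the toric syndrome modulo 2, a face f of the minor contributes once
   for every nu in Omega with pi_c(nu) = f, so the toric syndrome at e counts,
   mod 2, the nu in Omega whose c-face contains e.  Now pi_c(nu) is the face of
   nu opposite its unique vertex of color c, and an edge e of the minor avoids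
   that vertex; hence e lies in pi_c(nu) exactly when it lies in nu, and the
   count is the color-code syndrome at e. *)


Lemma subset_card_predE (T : finType) (U S : {set T}) :
  0 < #|U| -> S \subset U -> #|S| = #|U|.-1 -> exists2 x, x \in U & S = U :\ x.
Proof.
move=> U_gt0 sSU cardS.
have /cards1P [x DUS] : #|U :\: S| == 1.
  by rewrite cardsD (setIidPr sSU) cardS; case: #|U| U_gt0 => // n _; rewrite subSnn.
have : x \in U :\: S by rewrite DUS set11.
rewrite inE => /andP [_ xU]; exists x => //.
by rewrite -DUS setDDr setDv set0U (setIidPr sSU).
Qed.

Lemma onto_subsets_card_pred (T I : finType) (U : {set T}) (A : {set I})
    (g : I -> {set T}) :
  0 < #|U| -> #|A| = #|U| -> {in A &, injective g} ->
  {in A, forall i, g i \subset U /\ #|g i| = #|U|.-1} ->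
  forall S : {set T}, S \subset U -> #|S| = #|U|.-1 -> exists2 i, i \in A & g i = S.
Proof.
move=> U_gt0 cardA g_inj gA S sSU cardS.
pose hyper := [set U :\ x | x in U].
have card_hyper : #|hyper| = #|U|.
  apply: card_in_imset => x y xU yU eqUxy; apply/eqP; apply: contraT => neq_xy.
  by have := setD11 x U; rewrite eqUxy !inE (negbTE neq_xy) xU.
have gA_hyper : g @: A = hyper.
  apply/eqP; rewrite eqEcard card_hyper card_in_imset // cardA leqnn andbT.
  apply/subsetP => _ /imsetP [i iA ->]; have [sgU cardg] := gA i iA.
  have [x xU ->] := subset_card_predE U_gt0 sgU cardg.
  exact: imset_f.
have [x xU ->] := subset_card_predE U_gt0 sSU cardS.
have : U :\ x \in g @: A by rewrite gA_hyper; apply: imset_f.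
by case/imsetP => i iA ->; exists i.
Qed.

Lemma odd_sum (T : finType) (P : pred T) (F : T -> nat) :
  odd (\sum_(x | P x) F x) = odd (\sum_(x | P x) odd (F x)).
Proof.
by apply: (big_rec2 (fun a b => odd a = odd b)) => // i a b _ IH; rewrite !oddD oddb IH.
Qed.

Lemma card_set_sum (T : finType) (P : pred T) : #|[set x | P x]| = \sum_x P x.
Proof. by rewrite -sum1dep_card big_mkcond; apply: eq_bigr => x _; case: (P x). Qed.

Lemma odd_card_odd_fibers (I J : finType) (A : {set I}) (p : I -> option J)
    (Q : pred J) :
  odd #|[set j | odd #|[set i in A | p i == Some j]| & Q j]|
  = odd #|[set i in A | oapp Q false (p i)]|.
Proof.
have fiber_sum i : (i \in A) && oapp Q false (p i)
                   = \sum_(j | Q j) ((i \in A) && (p i == Some j)) :> nat.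
  case: (p i) => [j0 /=|]; last by rewrite andbF big1 // => j _; rewrite andbF.
  rewrite big_mkcond (bigD1 j0) //= eqxx big1 ?addn0 => [|j neq_j]; last first.
    by rewrite (inj_eq Some_inj) eq_sym (negbTE neq_j) andbF if_same.
  by case: (Q j0); rewrite ?andbT ?andbF.
rewrite !card_set_sum.
under [in RHS]eq_bigr => i _ do rewrite fiber_sum.
rewrite exchange_big /= [in RHS]odd_sum [in RHS]big_mkcond /=.
by congr odd; apply: eq_bigr => j _; case: (Q j); rewrite ?andbT ?andbF ?card_set_sum.
Qed.

Section ColexDualTetrahedron.

Variables (K : dual_complex) (c : color) (nu : Tet K).
Hypothesis HK : is_colex_dual K.

Let V := [set v | tv nu v].

Lemma face_vertex_tet (f : Fc K) (v : Vx K) : ft f nu -> fv f v -> tv nu v.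
Proof.
(* The incidence axiom is stated along an edge, so borrow one of the edges of f. *)
have [_ /(_ f) [_ cardE] _ inc _] := HK.
have [e0 _] : exists e0, e0 \in [set e | ef e f] by apply/set0Pn; rewrite -card_gt0 cardE.
by have [_ _ fv_tv _] := inc e0 f nu v.
Qed.

Lemma tet_vertex_of_color : exists2 w, tv nu w & col w = c.
Proof.
have [_ _ /(_ nu) [cardV _ _] _ [col_inj _ _]] := HK.
have colV : (@col K) @: V = [set: color].
  apply/eqP; rewrite eqEcard subsetT cardsT card_ord card_in_imset ?cardV //.
  by move=> u v; rewrite !inE; apply: col_inj.
have : c \in (@col K) @: V by rewrite colV inE.
by case/imsetP => w; rewrite inE => nuw ->; exists w.
Qed.

Lemma cface_verticesE (f : Fc K) (w : Vx K) :
  ft f nu -> is_cface c f -> tv nu w -> col w = c -> [set v | fv f v] = V :\ w.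
Proof.
have [_ /(_ f) [cardV _] /(_ nu) [cardT _ _] _ _] := HK.
move=> f_nu /forallP cf nuw colw; apply/eqP.
move: cardT; rewrite -/V (cardsD1 w) inE nuw add1n => -[cardVw].
rewrite eqEcard cardV cardVw leqnn andbT.
apply/subsetP => v; rewrite !inE => fvv.
rewrite (face_vertex_tet f_nu fvv) andbT; apply: contraTneq (cf v) => eq_vw.
by rewrite fvv eq_vw colw eqxx.
Qed.

Lemma cface_exists : exists f, ft f nu && is_cface c f.
Proof.
have [_ cardF /(_ nu) [cardV _ cardT] _ [col_inj _ face_inj]] := HK.
have [w nuw colw] := tet_vertex_of_color.
have cardVw : #|V :\ w| = #|V|.-1 by rewrite [#|V|](cardsD1 w) inE nuw.
have verts_inj : {in [set f | ft f nu] &, injective (fun f => [set v | fv f v])}.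
  move=> f1 f2; rewrite !inE => f1_nu f2_nu /setP eq_f12.
  by apply: face_inj f1_nu f2_nu _ => v; have := eq_f12 v; rewrite !inE.
have verts_sub : {in [set f | ft f nu], forall f,
    [set v | fv f v] \subset V /\ #|[set v | fv f v]| = #|V|.-1}.
  move=> f; rewrite inE => f_nu; rewrite (proj1 (cardF f)) cardV; split=> //.
  by apply/subsetP => v; rewrite !inE; apply: face_vertex_tet.
have [||f] := onto_subsets_card_pred _ _ verts_inj verts_sub (subsetDl V [set w]) cardVw.
- by rewrite cardV.
- by rewrite cardT cardV.
rewrite inE => f_nu Vf; exists f; rewrite f_nu; apply/forallP => v; apply/implyP => fvv.
have : v \in V :\ w by rewrite -Vf inE.
rewrite !inE => /andP [neq_vw nuv]; apply: contra neq_vw => /eqP colv.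
by apply/eqP; apply: col_inj nuv nuw _; rewrite colv colw.
Qed.

Lemma cface_edge (e : Ed K) (f : Fc K) :
  minor_edge c e -> et e nu -> ft f nu -> is_cface c f -> ef e f.
Proof.
have [cardE /(_ f) [cardV cardEf] _ inc [_ edge_inj _]] := HK.
move=> /forallP minor_e e_nu f_nu cf.
have [w nuw colw] := tet_vertex_of_color.
have Vf := cface_verticesE f_nu cf nuw colw.
have edge_tet e' : ef e' f -> et e' nu.
  by have [_ _ _ ef_et] := inc e' f nu w; move/ef_et; apply.
(* Distinct edges of f have distinct pairs of ends among the three vertices of f,
   so every such pair, in particular the ends of e, spans an edge of f. *)
have ends_inj : {in [set e' | ef e' f] &, injective (fun e' => [set v | ev e' v])}.
  move=> e1 e2; rewrite !inE => e1f e2f /setP eq_e12.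
  apply: edge_inj (edge_tet _ e1f) (edge_tet _ e2f) _ => v.
  by have := eq_e12 v; rewrite !inE.
have ends_sub : {in [set e' | ef e' f], forall e',
    [set v | ev e' v] \subset [set v | fv f v] /\
    #|[set v | ev e' v]| = #|[set v | fv f v]|.-1}.
  move=> e'; rewrite inE => e'f; rewrite cardE cardV; split=> //.
  by apply/subsetP => v; rewrite !inE; have [ev_fv _ _ _] := inc e' f nu v; apply: ev_fv.
have ends_e : [set v | ev e v] \subset [set v | fv f v].
  rewrite Vf; apply/subsetP => v; rewrite !inE => evv.
  have [_ ev_tv _ _] := inc e f nu v; rewrite ev_tv // andbT.
  by apply: contraTneq (minor_e v) => eq_vw; rewrite evv eq_vw colw eqxx.
have [||e' e'f /setP eq_ends] :=
  onto_subsets_card_pred _ _ ends_inj ends_sub ends_e ltac:(by rewrite cardE cardV).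
- by rewrite cardV.
- by rewrite cardEf cardV.
rewrite inE in e'f; suff -> : e = e' by [].
by apply: edge_inj e_nu (edge_tet _ e'f) _ => v; have := eq_ends v; rewrite !inE.
Qed.

Lemma pi_c_edge (e : Ed K) :
  minor_edge c e -> oapp (ef e) false (pi_c c nu) = et e nu.
Proof.
move=> minor_e; rewrite /pi_c; case: pickP => [f /andP [f_nu cf] | no_cface] /=.
  apply/idP/idP => [ef_f | e_nu]; last exact: cface_edge.
  have [_ _ _ inc _] := HK; have [w _ _] := tet_vertex_of_color.
  by have [_ _ _ ef_et] := inc e f nu w; apply: ef_et.
by have [f] := cface_exists; rewrite no_cface.
Qed.

End ColexDualTetrahedron.

Theorem theorem1 (K : dual_complex) (HK : is_colex_dual K) (c : color)
    (Omega : {set Tet K}) (e : Ed K) :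
  minor_edge c e ->
  tc_syndrome (pi_support c Omega) e = cc_syndrome Omega e.
Proof.
move=> minor_e; rewrite /tc_syndrome /cc_syndrome.
have -> : #|[set f in pi_support c Omega | ef e f]|
          = #|[set f | odd #|[set nu in Omega | pi_c c nu == Some f]| & ef e f]|.
  by apply: eq_card => f; rewrite !inE.
rewrite odd_card_odd_fibers; congr odd; apply: eq_card => nu.
by rewrite !inE pi_c_edge.
Qed.
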